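(* Let a (continuous) fibration of $\mathbb R^n$ by oriented affine $k$-planes be given, with $q=n-k$, and let $p\colon\mathbb R^n\to\mathbb R^n$ send each point $x$ to the point of the fiber through $x$ nearest to the origin. Then the base space $p(\mathbb R^n)$ is a connected, contractible, $q$-dimensional submanifold of $\mathbb R^n$.
   Context: A fibration of $\mathbb R^n$ by oriented affine $k$-planes is a family of pairwise disjoint oriented affine $k$-planes covering $\mathbb R^n$ which forms a locally trivial bundle, i.e. the map sending a point to its fiber is continuous; fibers need not be skew. *)

From HB Require Import structures.
From mathcomp Require Import all_boot all_order all_algebra.
From mathcomp Require Import all_classical all_reals all_analysis.
Set Implicit Arguments. Unset Strict Implicit. Unset Printing Implicit Defensive.
Import Order.TTheory GRing.Theory Num.Theory.
Import numFieldNormedType.Exports.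
Local Open Scope classical_set_scope.
Local Open Scope ring_scope.

Section Defs.
Variables (R : realType) (n k : nat).

(* The affine k-plane  a + rowspace(E)  (E has k rows; it is a k-plane when
   row_free E). *)
Definition aplane (a : 'rV[R]_n) (E : 'M[R]_(k, n)) : set 'rV[R]_n :=
  [set y | (y - a <= E)%MS].

(* (a,E) and (b,F) present the same ORIENTED affine plane: same point set
   and the change of (ordered) basis from E to F has positive determinant. *)
Definition same_oplane (a : 'rV[R]_n) (E : 'M[R]_(k, n))
    (b : 'rV[R]_n) (F : 'M[R]_(k, n)) : Prop :=
  (b - a <= E)%MS /\ exists M : 'M[R]_k, 0 < \det M /\ F = M *m E.

(* L x = (a, E) presents the oriented fiber through x.  A fibration of R^n
   by oriented affine k-planes: every fiber is a k-plane through x, fibers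
   that meet coincide as oriented planes (pairwise disjoint family covering
   R^n), and x |-> fiber is continuous (for the topology of the space of
   oriented affine k-planes, i.e. locally it admits continuous presentations
   by a base point and an oriented frame). *)
Definition oriented_affine_fibration
    (L : 'rV[R]_n -> 'rV[R]_n * 'M[R]_(k, n)) : Prop :=
  [/\ (forall x, row_free (L x).2),
      (forall x, aplane (L x).1 (L x).2 x),
      (forall x y, (aplane (L x).1 (L x).2 `&` aplane (L y).1 (L y).2) !=set0 ->
          same_oplane (L x).1 (L x).2 (L y).1 (L y).2) &
      (forall x0, exists U : set 'rV[R]_n, [/\ open U, U x0 &
          exists (a : 'rV[R]_n -> 'rV[R]_n) (E : 'rV[R]_n -> 'M[R]_(k, n)),
            [/\ {within U, continuous a}, {within U, continuous E} &
                forall y, U y -> row_free (E y) /\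
                  same_oplane (L y).1 (L y).2 (a y) (E y)]])].

Definition sqnorm (v : 'rV[R]_n) : R := \sum_(i < n) v ord0 i ^+ 2.

Definition nearest_point_map (L : 'rV[R]_n -> 'rV[R]_n * 'M[R]_(k, n))
    (p : 'rV[R]_n -> 'rV[R]_n) : Prop :=
  forall x, aplane (L x).1 (L x).2 (p x) /\
    forall z, aplane (L x).1 (L x).2 z -> sqnorm (p x) <= sqnorm z.

End Defs.

Definition contractible (R : realType) (T : topologicalType) (A : set T) : Prop :=
  exists (b : T) (H : R * T -> T),
    [/\ A b,
        {within [set t : R | 0 <= t <= 1] `*` A, continuous H},
        (forall t x, 0 <= t <= 1 -> A x -> A (H (t, x))) &
        (forall x, A x -> H (0, x) = x /\ H (1, x) = b)].

(* A is a q-dimensional (topological, embedded) submanifold of R^n: each point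
   of A has an open neighbourhood U in R^n with A `&` U homeomorphic to an open
   subset of R^q. *)
Definition top_submanifold (R : realType) (n q : nat) (A : set 'rV[R]_n) : Prop :=
  forall b, A b -> exists (U : set 'rV[R]_n) (V : set 'rV[R]_q)
    (phi : 'rV[R]_q -> 'rV[R]_n) (psi : 'rV[R]_n -> 'rV[R]_q),
    [/\ open U /\ U b, open V,
        {within V, continuous phi} /\ {within A `&` U, continuous psi},
        (forall v, V v -> (A `&` U) (phi v) /\ psi (phi v) = v) &
        (forall y, (A `&` U) y -> V (psi y) /\ phi (psi y) = y)].

From HB Require Import structures.
From mathcomp Require Import all_boot all_order all_algebra.
From mathcomp Require Import all_classical all_reals all_analysis.
Import Order.TTheory GRing.Theory Num.Theory.
Import numFieldNormedType.Exports.
Local Open Scope classical_set_scope.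
Local Open Scope ring_scope.

Set Implicit Arguments.
Unset Strict Implicit.
Unset Printing Implicit Defensive.

(* Over a neighbourhood the fibers have continuous frames [(a, E)], and the
   point of [a + <E>] nearest to the origin is [a - a E^T (E E^T)^-1 E], so
   [p] is continuous.  Since [p] is constant on fibers it fixes its image:
   [p] retracts R^n onto its range, which [(t, x) |-> p ((1 - t) x)]
   contracts to [p 0].  Near [b], each fiber meets the normal slice
   [b + ker E_b^T] of the fiber through [b] in exactly one point, depending
   continuously on the fiber; composing [p] with a linear parametrization of
   this (n - k)-dimensional slice gives a chart of the range, inverted by
   sending [y] to the slice point of its fiber. *)

Section mx_cvg.
Context {R : numFieldType} {T : Type} {F : set_system T} {FF : Filter F}.

Lemma cvg_mxP m n (f : T -> 'M[R]_(m, n)) (A : 'M[R]_(m, n)) :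
  f @ F --> A <-> forall i j, (fun x => f x i j) @ F --> A i j.
Proof.
split=> [fA i j|fA S /= [P PA sPS]].
  exact: (cvg_comp _ _ fA (@coord_continuous R m n i j A)).
have Pf : \forall x \near F, forall ij : 'I_m * 'I_n, P ij.1 ij.2 (f x ij.1 ij.2).
  by apply: filter_forall => ij; exact: fA _ _ _ (PA ij.1 ij.2).
by apply: filterS Pf => x Px; apply: sPS => i j; exact: (Px (i, j)).
Qed.

Lemma cvg_trmx m n (f : T -> 'M[R]_(m, n)) (A : 'M[R]_(m, n)) :
  f @ F --> A -> (fun x => (f x)^T) @ F --> A^T.
Proof.
move=> /cvg_mxP fA; apply/cvg_mxP => i j; rewrite mxE.
by under eq_cvg do rewrite mxE; exact: fA.
Qed.

Lemma cvg_mulmx m n r (f : T -> 'M[R]_(m, n)) (g : T -> 'M[R]_(n, r))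
    (A : 'M[R]_(m, n)) (B : 'M[R]_(n, r)) :
  f @ F --> A -> g @ F --> B -> (fun x => f x *m g x) @ F --> A *m B.
Proof.
move=> /cvg_mxP fA /cvg_mxP gB; apply/cvg_mxP => i j; rewrite mxE.
under eq_cvg do rewrite mxE.
apply: (@cvg_big _ _ +%R 0 xpredT add_continuous _ _ _
  (fun l x => f x i l * g x l j)) => // l _.
exact: cvgM.
Qed.

Lemma cvg_det n (f : T -> 'M[R]_n) (A : 'M[R]_n) :
  f @ F --> A -> (fun x => \det (f x)) @ F --> \det A.
Proof.
move=> /cvg_mxP fA; rewrite /determinant; under eq_cvg do rewrite /determinant.
apply: (cvg_big add_continuous) => // s _; apply: cvgM; first exact: cvg_cst.
exact: (cvg_big mul_continuous).
Qed.

Lemma cvg_adj n (f : T -> 'M[R]_n) (A : 'M[R]_n) :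
  f @ F --> A -> (fun x => \adj (f x)) @ F --> \adj A.
Proof.
move=> /cvg_mxP fA; apply/cvg_mxP => i j; rewrite mxE.
under eq_cvg do rewrite mxE.
apply: cvgM; first exact: cvg_cst.
apply: cvg_det; apply/cvg_mxP => k l; rewrite !mxE.
by under eq_cvg do rewrite !mxE; exact: fA.
Qed.

Lemma cvg_invmx n (f : T -> 'M[R]_n) (A : 'M[R]_n) :
  A \in unitmx -> f @ F --> A -> (fun x => invmx (f x)) @ F --> invmx A.
Proof.
move=> uA fA; have detA : \det A != 0 by rewrite -unitfE -unitmxE.
have adjV : (fun x => (\det (f x))^-1 *: \adj (f x)) @ F --> invmx A.
  rewrite /invmx uA; apply: cvgZ; last exact: cvg_adj.
  exact: cvgV (cvg_det fA).
apply: cvg_trans adjV; apply: near_eq_cvg.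
apply: filterS (cvgr_neq0 _ (cvg_det fA) detA) => x detfx.
by rewrite /invmx unitmxE unitfE detfx.
Qed.

End mx_cvg.

Section affine_planes.
Variables (R : realType) (n k : nat).
Implicit Types (a b y z : 'rV[R]_n) (E F : 'M[R]_(k, n)).

Lemma sqnormE (v : 'rV[R]_n) : sqnorm v = (v *m v^T) 0 0.
Proof. by rewrite /sqnorm mxE; apply: eq_bigr => i _; rewrite mxE expr2. Qed.

Lemma sqnorm_ge0 (v : 'rV[R]_n) : 0 <= sqnorm v.
Proof. by apply: sumr_ge0 => i _; exact: sqr_ge0. Qed.

Lemma sqnorm_eq0 (v : 'rV[R]_n) : sqnorm v = 0 -> v = 0.
Proof.
move=> /eqP; rewrite /sqnorm psumr_eq0 => [/allP v0|i _]; last exact: sqr_ge0.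
apply/rowP => i; rewrite mxE; apply/eqP; rewrite -sqrf_eq0.
exact: (implyP (v0 i (mem_index_enum i))).
Qed.

Lemma sqnormD (u v : 'rV[R]_n) : u *m v^T = 0 ->
  sqnorm (u + v) = sqnorm u + sqnorm v.
Proof.
move=> uv; have vu : v *m u^T = 0.
  by rewrite -[v *m _]trmxK trmx_mul trmxK uv trmx0.
by rewrite !sqnormE linearD /= mulmxDl !mulmxDr uv vu !mxE addr0 add0r.
Qed.

Lemma unitmx_gram E : row_free E -> E *m E^T \in unitmx.
Proof.
move=> freeE; rewrite -row_free_unit; apply: inj_row_free => v vEE.
have : sqnorm (v *m E) = 0.
  by rewrite sqnormE trmx_mul !mulmxA -(mulmxA v) vEE mul0mx mxE.
by move/sqnorm_eq0/eqP; rewrite mulmx_free_eq0 // => /eqP.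
Qed.

Lemma aplane_subr a E y z : aplane a E y -> aplane a E z -> (y - z <= E)%MS.
Proof.
rewrite /aplane /= => yE zE.
have -> : y - z = (y - a) - (z - a) by rewrite opprB addrA subrK.
by apply: addmx_sub => //; rewrite eqmx_opp.
Qed.

Lemma same_oplane_aplane a E b F :
  same_oplane a E b F -> aplane a E = aplane b F.
Proof.
move=> [baE [M [detM ->]]].
have unitM : M \in unitmx by rewrite unitmxE unitfE gt_eqF.
have EME : (E :=: M *m E)%MS.
  by apply/eqmxP; rewrite -{1}(mulKmx unitM E) !submxMl.
apply/seteqP; split=> y; rewrite /aplane /= -EME => yE.
  have -> : y - b = (y - a) - (b - a) by rewrite opprB addrA subrK.
  by apply: addmx_sub => //; rewrite eqmx_opp.
have -> : y - a = (y - b) + (b - a) by rewrite addrA subrK.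
exact: addmx_sub.
Qed.

Lemma same_oplane_unitmx a E b F : row_free E -> same_oplane a E b F ->
  F *m E^T \in unitmx.
Proof.
move=> freeE [_ [M [detM ->]]]; rewrite -mulmxA unitmx_mul unitmx_gram //.
by rewrite unitmxE unitfE gt_eqF.
Qed.

(* The point of the plane [a + <E>] whose difference with [b] is orthogonal
   to [<F>]; it is well defined when [E *m F^T] is invertible. *)
Definition plane_meet a E b F : 'rV[R]_n :=
  a + (b - a) *m F^T *m invmx (E *m F^T) *m E.

Lemma plane_meet_in a E b F : aplane a E (plane_meet a E b F).
Proof. by rewrite /aplane /plane_meet /= addrC addKr submxMl. Qed.

Lemma plane_meet_orth a E b F : E *m F^T \in unitmx ->
  (plane_meet a E b F - b) *m F^T = 0.
Proof.
move=> unitEF; rewrite /plane_meet mulmxBl mulmxDl -!mulmxA mulVmx // mulmx1.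
by rewrite mulmxBl addrCA subrr addr0 subrr.
Qed.

Lemma plane_meet_uniq a E b F z : E *m F^T \in unitmx ->
  aplane a E z -> (z - b) *m F^T = 0 -> z = plane_meet a E b F.
Proof.
move=> unitEF zE zb.
have /submxP [D zD] := aplane_subr zE (plane_meet_in a E b F).
have : D *m (E *m F^T) = 0.
  rewrite mulmxA -zD (_ : z - _ = (z - b) - (plane_meet a E b F - b)).
    by rewrite mulmxBl zb plane_meet_orth // subrr.
  by rewrite opprB addrA subrK.
move=> /(congr1 (mulmx^~ (invmx (E *m F^T)))); rewrite mul0mx mulmxK // => D0.
by apply/eqP; rewrite -subr_eq0 zD D0 mul0mx.
Qed.

Lemma plane_meet_nearest a E z : row_free E -> aplane a E z ->
  (forall w, aplane a E w -> sqnorm z <= sqnorm w) -> z = plane_meet a E 0 E.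
Proof.
move=> freeE zE zmin; set m := plane_meet a E 0 E.
have mE : m *m E^T = 0 by rewrite -[m]subr0 plane_meet_orth // unitmx_gram.
have /submxP [D zD] := aplane_subr zE (plane_meet_in a E 0 E).
have pythagoras : sqnorm z = sqnorm m + sqnorm (z - m).
  rewrite -sqnormD; first by rewrite addrC subrK.
  by rewrite zD trmx_mul mulmxA mE mul0mx.
have := zmin _ (plane_meet_in a E 0 E); rewrite -/m pythagoras gerDl => zm0.
apply/eqP; rewrite -subr_eq0; apply/eqP/sqnorm_eq0.
by apply/eqP; rewrite eq_le zm0 sqnorm_ge0.
Qed.

Lemma cvg_plane_meet {T} {G : set_system T} {FG : Filter G}
    (a b : T -> 'rV[R]_n) (E F : T -> 'M[R]_(k, n)) a0 E0 b0 F0 :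
  E0 *m F0^T \in unitmx -> a @ G --> a0 -> E @ G --> E0 ->
  b @ G --> b0 -> F @ G --> F0 ->
  (fun x => plane_meet (a x) (E x) (b x) (F x)) @ G --> plane_meet a0 E0 b0 F0.
Proof.
move=> unitEF a_a0 E_E0 b_b0 F_F0; apply: cvgD => //.
apply: cvg_mulmx => //; apply: cvg_mulmx.
  by apply: cvg_mulmx; [apply: cvgB | apply: cvg_trmx].
by apply: cvg_invmx => //; apply: cvg_mulmx => //; apply: cvg_trmx.
Qed.

End affine_planes.

Lemma contractible_connected (R : realType) (T : topologicalType) (A : set T) :
  contractible R A -> connected A.
Proof.
move=> [b [H [Ab contH HA H01]]].
set I := [set t : R | 0 <= t <= 1].
have I_itv : I = `[0, 1]%classic by apply/seteqP; split=> t; rewrite /= in_itv.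
have I0 : I 0 by rewrite /I /= lexx ler01.
have I1 : I 1 by rewrite /I /= lexx ler01.
have -> : A = \bigcup_(x in A) ((fun t => H (t, x)) @` I).
  apply/seteqP; split=> [x Ax|_ [x Ax [t It <-]]]; last exact: HA.
  by exists x => //; exists 0 => //; rewrite (H01 x Ax).1.
apply: bigcup_connected => [|x Ax].
  by exists b => x Ax; exists 1 => //; rewrite (H01 x Ax).2.
rewrite I_itv; apply: connected_continuous_connected; first exact: segment_connected.
rewrite -I_itv; apply/subspace_continuousP => t It.
have pair_cvg :
    (fun s => (s, x)) @ within I (nbhs t) --> within (I `*` A) (nbhs (t, x)).
  have pairC : (fun s => (s, x)) @ t --> (t, x).
    exact: (cvg_pair cvg_id (cvg_cst x)).
  move=> S; rewrite !nbhs_simpl /= => /pairC IA_S.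
  have : nbhs t [set s | (I `*` A) (s, x) -> S (s, x)] := IA_S.
  by apply: filterS => s IAs Is; apply: IAs.
move/subspace_continuousP : contH => /(_ (t, x) (conj It Ax)) H_cvg.
exact: cvg_comp pair_cvg H_cvg.
Qed.

Section nearest_point_fibration.
Variables (R : realType) (n k : nat).
Variables (L : 'rV[R]_n -> 'rV[R]_n * 'M[R]_(k, n)) (p : 'rV[R]_n -> 'rV[R]_n).
Hypotheses (fibL : oriented_affine_fibration L) (nearest_p : nearest_point_map L p).

Local Notation fiber x := (aplane (L x).1 (L x).2).

Lemma fiber_eq x z : fiber x z -> fiber z = fiber x.
Proof.
have [_ inL meetL _] := fibL => xz.
by apply: same_oplane_aplane; apply: meetL; exists z; split => //; exact: inL.
Qed.

Lemma nearest_frame y a (E : 'M[R]_(k, n)) :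
  row_free E -> fiber y = aplane a E -> p y = plane_meet a E 0 E.
Proof.
move=> freeE yE; have [py pmin] := nearest_p y.
by apply: plane_meet_nearest; rewrite -?yE.
Qed.

Lemma nearest_fiber x : fiber x (p x).
Proof. exact: (nearest_p x).1. Qed.

Lemma nearest_eq x w : fiber x w -> p w = p x.
Proof.
have [freeL _ _ _] := fibL => xw.
by rewrite (nearest_frame (freeL x) (fiber_eq xw)) (nearest_frame (freeL x) erefl).
Qed.

Lemma nearest_id y : range p y -> p y = y.
Proof. by move=> [x _ <-]; apply: nearest_eq; exact: nearest_fiber. Qed.

Lemma local_frame x0 : exists (U : set 'rV[R]_n) (a : 'rV[R]_n -> 'rV[R]_n)
    (E : 'rV[R]_n -> 'M[R]_(k, n)), [/\ open U, U x0 &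
  forall y, U y -> [/\ a @ y --> a y, E @ y --> E y, row_free (E y) &
    same_oplane (L y).1 (L y).2 (a y) (E y)]].
Proof.
have [_ _ _ locL] := fibL.
have [U [openU Ux0 [a [E [a_cont E_cont frame]]]]] := locL x0.
rewrite continuous_open_subspace // in a_cont.
rewrite continuous_open_subspace // in E_cont.
exists U, a, E; split=> // y Uy; have [freeE yaE] := frame y Uy.
by split => //; [apply: a_cont | apply: E_cont]; rewrite inE.
Qed.

Lemma continuous_nearest : continuous p.
Proof.
move=> x0; have [U [a [E [openU Ux0 frame]]]] := local_frame x0.
have [a_cont E_cont freeE _] := frame x0 Ux0.
have pE y : U y -> p y = plane_meet (a y) (E y) 0 (E y).
  by move=> /frame [_ _ freeEy /same_oplane_aplane]; exact: nearest_frame.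
have near_pE : {near x0, (fun y => plane_meet (a y) (E y) 0 (E y)) =1 p}.
  have : nbhs x0 U by exact: open_nbhs_nbhs.
  by apply: filterS => y /pE ->.
apply: cvg_trans (near_eq_cvg near_pE) _; rewrite pE //.
by apply: cvg_plane_meet => //; [exact: unitmx_gram | exact: cvg_cst].
Qed.

Lemma nearest_contractible : contractible R (range p).
Proof.
exists (p 0), (fun tx => p ((1 - tx.1) *: tx.2)); split.
- by exists 0.
- apply: continuous_subspaceT => tx.
  apply: continuous_comp; last exact: continuous_nearest.
  apply: continuousZ; last exact: cvg_snd.
  by apply: cvgB; [exact: cvg_cst | exact: cvg_fst].
- by move=> t x _ _; exists ((1 - t) *: x).
- move=> _ [x _ <-]; rewrite /= subr0 subrr scale1r scale0r; split => //.
  by apply: nearest_id; exists x.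
Qed.

Section chart.
Variables (b : 'rV[R]_n) (U1 : set 'rV[R]_n).
Variables (a : 'rV[R]_n -> 'rV[R]_n) (E : 'rV[R]_n -> 'M[R]_(k, n)).
Hypotheses (openU1 : open U1) (U1b : U1 b).
Hypothesis frame : forall y, U1 y -> [/\ a @ y --> a y, E @ y --> E y,
  row_free (E y) & same_oplane (L y).1 (L y).2 (a y) (E y)].

Local Notation E0 := (L b).2.

Definition transverse : set 'rV[R]_n := [set y | U1 y /\ E y *m E0^T \in unitmx].

(* The point where the fiber through [y] crosses the normal slice
   [b + ker E0^T] of the fiber through [b]. *)
Definition to_slice y := plane_meet (a y) (E y) b E0.

Lemma open_transverse : open transverse.
Proof.
rewrite openE => y [U1y unitEy]; have [_ E_cont _ _] := frame U1y.
have det_cvg : (fun z => \det (E z *m E0^T)) @ y --> \det (E y *m E0^T).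
  exact: cvg_det (cvg_mulmx E_cont (cvg_cst _)).
have /(cvgr_neq0 _ det_cvg) det_near : \det (E y *m E0^T) != 0.
  by rewrite -unitfE -unitmxE.
have U1_near : nbhs y U1 by exact: open_nbhs_nbhs.
apply: filterS (filterI U1_near det_near) => z [U1z detz].
by rewrite /transverse /= unitmxE unitfE.
Qed.

Lemma transverse_b : transverse b.
Proof.
split=> //; have [_ _ _ bE] := frame U1b; have [freeL _ _ _] := fibL.
exact: same_oplane_unitmx (freeL b) bE.
Qed.

Lemma to_slice_fiber y : transverse y -> fiber y (to_slice y).
Proof.
move=> [/frame [_ _ _ /same_oplane_aplane ->] _]; exact: plane_meet_in.
Qed.

Lemma to_slice_uniq y z : transverse y -> fiber y z ->
  (z - b) *m E0^T = 0 -> to_slice y = z.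
Proof.
move=> [/frame [_ _ _ /same_oplane_aplane yE] unitEy] yz zb.
by apply/esym/plane_meet_uniq; rewrite -?yE.
Qed.

Lemma to_slice_orth y : transverse y -> (to_slice y - b) *m E0^T = 0.
Proof. by move=> [_]; exact: plane_meet_orth. Qed.

Lemma to_slice_b : to_slice b = b.
Proof.
have [freeL inL _ _] := fibL.
by apply: to_slice_uniq transverse_b (inL b) _; rewrite subrr mul0mx.
Qed.

Lemma cvg_to_slice y : transverse y -> to_slice @ y --> to_slice y.
Proof.
move=> [U1y unitEy]; have [a_cont E_cont _ _] := frame U1y.
exact: (cvg_plane_meet unitEy a_cont E_cont (cvg_cst _) (cvg_cst _)).
Qed.

(* The slice point of [y] must be transverse too, for [slice_coord y] to be a
   chart parameter. *)
Definition chart_dom : set 'rV[R]_n := transverse `&` to_slice @^-1` transverse.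

Lemma open_chart_dom : open chart_dom.
Proof.
have T_nbhs z : transverse z -> nbhs z transverse.
  by move=> Tz; apply: open_nbhs_nbhs; split => //; exact: open_transverse.
rewrite openE => y [Ty Tgy]; apply: filterI; first exact: T_nbhs.
exact: cvg_to_slice Ty _ (T_nbhs _ Tgy).
Qed.

Lemma chart_dom_b : chart_dom b.
Proof. by split; rewrite /= ?to_slice_b; exact: transverse_b. Qed.

Lemma rank_normal_space : \rank (kermx E0^T) = (n - k)%N.
Proof.
by have [freeL _ _ _] := fibL; rewrite mxrank_ker mxrank_tr (eqP (freeL b)).
Qed.

Definition slice_basis : 'M[R]_(n - k, n) :=
  castmx (rank_normal_space, erefl n) (row_base (kermx E0^T)).

Lemma slice_basis_free : row_free slice_basis.
Proof. by rewrite /row_free (eqmx_cast _ _) eq_row_base rank_normal_space. Qed.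

Lemma sub_slice_basis m (u : 'M[R]_(m, n)) :
  (u <= slice_basis)%MS = (u *m E0^T == 0).
Proof. by rewrite (eqmx_cast _ _) eq_row_base sub_kermx. Qed.

Definition slice_point (v : 'rV[R]_(n - k)) := b + v *m slice_basis.

Definition slice_coord y := (to_slice y - b) *m pinvmx slice_basis.

Definition chart_param : set 'rV[R]_(n - k) :=
  slice_point @^-1` transverse `&` (p \o slice_point) @^-1` chart_dom.

Lemma continuous_slice_point : continuous slice_point.
Proof.
move=> v; rewrite /slice_point; apply: (@cvgD _ _ _ (nbhs v)).
  exact: cvg_cst.
by apply: cvg_mulmx; [exact: cvg_id | exact: cvg_cst].
Qed.

Lemma open_chart_param : open chart_param.
Proof.
have pw_cont : continuous (p \o slice_point).
  move=> v; apply: continuous_comp; first exact: continuous_slice_point.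
  exact: continuous_nearest.
apply: openI; apply: open_comp.
- by move=> v _; exact: continuous_slice_point.
- exact: open_transverse.
- by move=> v _; exact: pw_cont.
- exact: open_chart_dom.
Qed.

Lemma cvg_slice_coord y : transverse y -> slice_coord @ y --> slice_coord y.
Proof.
move=> Ty; rewrite /slice_coord.
apply: (@cvg_mulmx _ _ (nbhs y)); last exact: cvg_cst.
by apply: cvgB; [exact: cvg_to_slice | exact: cvg_cst].
Qed.

Lemma slice_coordK v : chart_param v ->
  (range p `&` chart_dom) (p (slice_point v)) /\
  slice_coord (p (slice_point v)) = v.
Proof.
move=> [Tw [Ty Tgy]]; set w := slice_point v; set y := p w.
split; first by split => //; exists w.
have [_ inL _ _] := fibL.
have gyw : to_slice y = w.
  apply: to_slice_uniq Ty _ _.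
    by rewrite /y (fiber_eq (nearest_fiber w)); exact: inL.
  by apply/eqP; rewrite -sub_slice_basis /w /slice_point addrC addKr submxMl.
rewrite /slice_coord gyw /w /slice_point addrC addKr.
by rewrite (mulmxKp slice_basis_free).
Qed.

Lemma slice_pointK y : (range p `&` chart_dom) y ->
  chart_param (slice_coord y) /\ p (slice_point (slice_coord y)) = y.
Proof.
move=> [py [Ty Tgy]].
have gyB : (to_slice y - b <= slice_basis)%MS.
  by rewrite sub_slice_basis; apply/eqP; exact: to_slice_orth.
have wg : slice_point (slice_coord y) = to_slice y.
  by rewrite /slice_point /slice_coord (mulmxKpV gyB) addrC subrK.
have pgy : p (to_slice y) = y.
  by rewrite (nearest_eq (to_slice_fiber Ty)) nearest_id.
by rewrite /chart_param /= wg pgy.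
Qed.

End chart.

Lemma range_nearest_submanifold : top_submanifold (n - k)%N (range p).
Proof.
move=> b _; have [U1 [a [E [openU1 U1b frame]]]] := local_frame b.
exists (chart_dom b U1 a E), (chart_param b U1 a E), (p \o slice_point b),
  (slice_coord b a E); split.
- by split; [exact: open_chart_dom | exact: chart_dom_b].
- exact: open_chart_param.
- split.
    apply: continuous_subspaceT => v; apply: continuous_comp.
      exact: continuous_slice_point.
    exact: continuous_nearest.
  apply: continuous_in_subspaceT => y /set_mem [_ [Ty _]].
  exact: (cvg_slice_coord frame Ty).
- by move=> v /(slice_coordK frame).
- by move=> y /(slice_pointK frame).
Qed.

End nearest_point_fibration.

Theorem lemma3p1 (R : realType) (n k : nat)
    (L : 'rV[R]_n -> 'rV[R]_n * 'M[R]_(k, n)) (p : 'rV[R]_n -> 'rV[R]_n) :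
  oriented_affine_fibration L -> nearest_point_map L p ->
  connected (range p) /\ contractible R (range p) /\
  top_submanifold (n - k)%N (range p).
Proof.
move=> fibL nearest_p; have contr_p := nearest_contractible fibL nearest_p.
split; first exact: (contractible_connected contr_p).
by split => // b; exact: (range_nearest_submanifold fibL nearest_p).
Qed.
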